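(* Let $n\ge2$, $\mathbb F\in\{\mathbb R,\mathbb C\}$, $A=(a^k_j)$ an $(n-1)\times(n-1)$ matrix over $\mathbb F$, and $\mathfrak a_A$ the Lie algebra with basis $e_1,\dots,e_n$ whose only nonzero brackets are $[e_j,e_n]=\sum_{k=1}^{n-1}a^k_je_k$, $j=1,\dots,n-1$ (and their antisymmetric counterparts). Let $\lambda_1,\dots,\lambda_{n-1}$ be the roots in $\mathbb C$ (with multiplicity) of the characteristic polynomial of $A$. If $p,q\in\mathbb N$ are such that $\mathrm{tr}(A^p)=\sum_i\lambda_i^p\ne0$, $\mathrm{tr}(A^q)=\sum_i\lambda_i^q\ne0$ and $\mathrm{tr}(A^{p+q})=\sum_i\lambda_i^{p+q}\ne0$, then $\mathfrak C_{pq}(\mathfrak a_A)$ is well defined and $$\mathfrak C_{pq}(\mathfrak a_A)=\frac{\mathrm{tr}(A^p)\,\mathrm{tr}(A^q)}{\mathrm{tr}(A^{p+q})}=\frac{(\lambda_1^p+\dots+\lambda_{n-1}^p)(\lambda_1^q+\dots+\lambda_{n-1}^q)}{\lambda_1^{p+q}+\dots+\lambda_{n-1}^{p+q}}.$$ Moreover, the rank of $\mathfrak a_A$ (the dimension of its Cartan subalgebras) equals the multiplicity of $0$ as a root of the characteristic polynomial of $A$, plus one.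
   Context: For $p,q\in\mathbb N$, $\mathfrak C_{pq}(\mathfrak g)$ is said to be well defined if there exist $u,v\in\mathfrak g$ with $\mathrm{tr}(\mathrm{ad}_u^{\,p})\ne0$, $\mathrm{tr}(\mathrm{ad}_v^{\,q})\ne0$, $\mathrm{tr}(\mathrm{ad}_u^{\,p}\mathrm{ad}_v^{\,q})\ne0$, and the value $\mathrm{tr}(\mathrm{ad}_u^{\,p})\,\mathrm{tr}(\mathrm{ad}_v^{\,q})/\mathrm{tr}(\mathrm{ad}_u^{\,p}\mathrm{ad}_v^{\,q})$ is the same for all such pairs $(u,v)$; this common value is $\mathfrak C_{pq}(\mathfrak g)$. *)

From HB Require Import structures.
From mathcomp Require Import all_boot all_order all_algebra.
From mathcomp Require Import reals.
From mathcomp.real_closed Require Import complex.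
Set Implicit Arguments. Unset Strict Implicit. Unset Printing Implicit Defensive.
Import Order.TTheory GRing.Theory Num.Theory.
Local Open Scope ring_scope.

(* The Lie algebra a_A on F^(m+1) (n = m+1), elements are row vectors,      *)
(* basis e_1..e_n = delta_mx 0 i, with e_n = the index ord_max.            *)

Section LieAlg.
Variables (F : fieldType) (m : nat) (A : 'M[F]_m).

(* For i = e_j with j < n : the vector sum_k a^k_j e_k  (a^k_j = A k j);
   for i = e_n : 0. *)
Definition aA_col (i : 'I_m.+1) : 'rV[F]_m.+1 :=
  match unlift ord_max i with
  | Some j => \row_k (match unlift ord_max k with Some k' => A k' j | None => 0 end)
  | None => 0
  end.

Definition aA_br_basis (i j : 'I_m.+1) : 'rV[F]_m.+1 :=
  if j == ord_max then aA_col i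
  else if i == ord_max then - aA_col j else 0.

Definition aA_bracket (u v : 'rV[F]_m.+1) : 'rV[F]_m.+1 :=
  \sum_(i < m.+1) \sum_(j < m.+1) (u 0 i * v 0 j) *: aA_br_basis i j.

(* matrix of ad_u (acting on row vectors: v *m aA_ad u = [u, v]) *)
Definition aA_ad (u : 'rV[F]_m.+1) : 'M[F]_m.+1 :=
  \matrix_(i < m.+1) aA_bracket u (delta_mx 0 i).

Definition Cpq_admissible (p q : nat) (u v : 'rV[F]_m.+1) : Prop :=
  [/\ \tr (aA_ad u ^+ p) != 0, \tr (aA_ad v ^+ q) != 0
    & \tr (aA_ad u ^+ p *m aA_ad v ^+ q) != 0].

Definition Cpq_well_defined_eq (p q : nat) (c : F) : Prop :=
  (exists u v, Cpq_admissible p q u v) /\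
  (forall u v, Cpq_admissible p q u v ->
     \tr (aA_ad u ^+ p) * \tr (aA_ad v ^+ q) / \tr (aA_ad u ^+ p *m aA_ad v ^+ q) = c).

(* ---- Cartan subalgebras; a subspace is the row space of a square matrix ---- *)
Definition aA_subalgebra (S : 'M[F]_m.+1) : Prop :=
  forall u v : 'rV[F]_m.+1, (u <= S)%MS -> (v <= S)%MS -> (aA_bracket u v <= S)%MS.

Fixpoint aA_lcs (S : 'M[F]_m.+1) (k : nat) : 'M[F]_m.+1 :=
  match k with
  | 0 => S
  | k'.+1 => (\sum_(i < m.+1) \sum_(j < m.+1)
               <<aA_bracket (row i S) (row j (aA_lcs S k'))>>)%MS
  end.

Definition aA_nilpotent (S : 'M[F]_m.+1) : Prop := exists k, aA_lcs S k = 0.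

Definition aA_self_normalizing (S : 'M[F]_m.+1) : Prop :=
  forall x : 'rV[F]_m.+1,
    (forall s : 'rV[F]_m.+1, (s <= S)%MS -> (aA_bracket x s <= S)%MS) -> (x <= S)%MS.

Definition aA_cartan (S : 'M[F]_m.+1) : Prop :=
  [/\ aA_subalgebra S, aA_nilpotent S & aA_self_normalizing S].

End LieAlg.

(* The conclusion of the lemma for a field F, with iota : F -> C an embedding
   into an algebraically closed field in which the char. polynomial splits. *)
Definition lemma2_concl (F C : fieldType) (iota : {rmorphism F -> C})
   (m : nat) (A : 'M[F]_m) : Prop :=
  (forall p q : nat, (0 < p)%N -> (0 < q)%N ->
     \tr (A ^+ p) != 0 -> \tr (A ^+ q) != 0 -> \tr (A ^+ (p + q)) != 0 ->
     Cpq_well_defined_eq A p q (\tr (A ^+ p) * \tr (A ^+ q) / \tr (A ^+ (p + q)))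
     /\ (forall lam : 'I_m -> C,
           char_poly (map_mx iota A) = \prod_(i < m) ('X - (lam i)%:P) ->
           iota (\tr (A ^+ p) * \tr (A ^+ q) / \tr (A ^+ (p + q)))
           = (\sum_i lam i ^+ p) * (\sum_i lam i ^+ q) / (\sum_i lam i ^+ (p + q))))
  /\
  ((exists S, aA_cartan A S) /\
   (forall S, aA_cartan A S -> \rank S = (mup 0 (char_poly A)).+1)).

From HB Require Import structures.
From mathcomp Require Import all_boot all_order all_algebra.
From mathcomp Require Import reals ring.
From mathcomp.real_closed Require Import complex.
Set Implicit Arguments. Unset Strict Implicit. Unset Printing Implicit Defensive.
Import Order.TTheory GRing.Theory Num.Theory.
Local Open Scope ring_scope.

(* Write u = h(u) + t(u) e_n, where t(u) is the last coordinate of u and h(u)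
   lies in the span of e_1, ..., e_(n-1).  With B := A^T acting on row
   vectors, [u, v] = (t(v) h(u) - t(u) h(v)) B, so in the splitting
   F^n = F^(n-1) + F e_n the matrix of ad_u is block triangular with diagonal
   blocks -t(u) B and 0.  Hence tr(ad_u^p ad_v^q) = (-t(u))^p (-t(v))^q
   tr(A^(p+q)), which makes the quotient defining C_pq independent of the
   admissible pair (u, v); u = v = e_n is admissible.
   A Cartan subalgebra S contains some x with t(x) = 1, because it is
   self-normalizing.  Nilpotency of S then puts S ∩ F^(n-1) inside the
   generalized kernel of B, and self-normalization gives the converse, so
   dim S = 1 + dim ker B^N = 1 + mult_0 (char_poly A).  Finally, the trace of
   A^p is the p-th power sum of the eigenvalues by Schur triangularization. *)

Section LastCoordinate.
Variables (F : fieldType) (n : nat).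

Definition emb_mx : 'M[F]_(n, n.+1) := \matrix_(i, j) (lift ord_max i == j)%:R.
Definition e_last : 'rV[F]_n.+1 := delta_mx 0 ord_max.
Definition e_last_col : 'cV[F]_n.+1 := delta_mx ord_max 0.
Definition last_coord (u : 'rV[F]_n.+1) : F := (u *m e_last_col) 0 0.
Definition head_vec (u : 'rV[F]_n.+1) : 'rV[F]_n := u *m emb_mx^T.

Lemma big_lift_eqr (f : 'I_n -> F) j :
  \sum_k f k * (lift ord_max k == j)%:R
    = if unlift ord_max j is Some k then f k else 0.
Proof.
case: unliftP => [k ->|->].
  rewrite (bigD1 k) //= eqxx mulr1 big1 ?addr0 // => i /negbTE.
  by rewrite (inj_eq (@lift_inj _ _)) => ->; rewrite mulr0.
by rewrite big1 // => i _; rewrite lift_eqF mulr0.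
Qed.

Lemma big_lift_eql (f : 'I_n.+1 -> F) k :
  \sum_j (lift ord_max k == j)%:R * f j = f (lift ord_max k).
Proof.
rewrite (bigD1 (lift ord_max k)) //= eqxx mul1r big1 ?addr0 // => i.
by rewrite eq_sym => /negbTE ->; rewrite mul0r.
Qed.

Lemma mulmx_emb_tr : emb_mx *m emb_mx^T = 1%:M.
Proof.
apply/matrixP => i j; rewrite !mxE.
rewrite (eq_bigr (fun k => (lift ord_max j == k)%:R * (lift ord_max i == k)%:R)).
  by rewrite big_lift_eql (inj_eq (@lift_inj _ _)) eq_sym.
by move=> k _; rewrite !mxE mulrC.
Qed.

Lemma mulmx_emb_last : emb_mx *m e_last_col = 0.
Proof.
apply/matrixP => i j; rewrite !mxE.
rewrite (eq_bigr (fun k => (lift ord_max i == k)%:R * (k == ord_max)%:R)).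
  by rewrite big_lift_eql lift_eqF.
by move=> k _; rewrite !mxE ord1 eqxx andbT.
Qed.

Lemma mulmx_e_last : e_last *m e_last_col = 1%:M.
Proof.
apply/matrixP => i j; rewrite !mxE (bigD1 ord_max) //= big1.
  by rewrite !mxE !eqxx !ord1 addr0 mulr1.
by move=> k /negbTE; rewrite !mxE => ->; rewrite andbF mul0r.
Qed.

Lemma mulmx_e_last_emb_tr : e_last *m emb_mx^T = 0.
Proof.
by rewrite -[e_last]trmxK -trmx_mul trmx_delta mulmx_emb_last trmx0.
Qed.

Lemma e_last_emb_partition : e_last_col *m e_last + emb_mx^T *m emb_mx = 1%:M.
Proof.
apply/matrixP => i j; rewrite !mxE big_ord1 !mxE !eqxx /=.
under eq_bigr do rewrite !mxE.
case: (unliftP ord_max i) => [i' ->|->].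
  rewrite lift_eqF mul0r add0r (bigD1 i') //= eqxx mul1r big1 ?addr0 //.
  move=> k /negbTE; rewrite (inj_eq (@lift_inj _ _)) => ->.
  by rewrite mul0r.
rewrite eqxx mul1r big1 ?addr0 1?eq_sym // => k _.
by rewrite lift_eqF mul0r.
Qed.

Lemma last_coordE u : last_coord u = u 0 ord_max.
Proof.
rewrite /last_coord mxE (bigD1 ord_max) //= big1.
  by rewrite !mxE !eqxx mulr1 addr0.
by move=> k /negbTE; rewrite !mxE => ->; rewrite mulr0.
Qed.

Lemma mulmx_e_last_col u : u *m e_last_col = (last_coord u)%:M.
Proof. exact: mx11_scalar. Qed.

Lemma last_coordD u v : last_coord (u + v) = last_coord u + last_coord v.
Proof. by rewrite /last_coord mulmxDl mxE. Qed.

Lemma last_coordZ a u : last_coord (a *: u) = a * last_coord u.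
Proof. by rewrite /last_coord -scalemxAl mxE. Qed.

Lemma last_coord0 : last_coord 0 = 0.
Proof. by rewrite /last_coord mul0mx mxE. Qed.

Lemma last_coord_emb w : last_coord (w *m emb_mx) = 0.
Proof. by rewrite /last_coord -mulmxA mulmx_emb_last mulmx0 mxE. Qed.

Lemma last_coord_e_last : last_coord e_last = 1.
Proof. by rewrite /last_coord mulmx_e_last mxE. Qed.

Lemma head_vec_emb w : head_vec (w *m emb_mx) = w.
Proof. by rewrite /head_vec -mulmxA mulmx_emb_tr mulmx1. Qed.

Lemma head_vec_e_last : head_vec e_last = 0.
Proof. exact: mulmx_e_last_emb_tr. Qed.

Lemma head_last_decomp u : u = last_coord u *: e_last + head_vec u *m emb_mx.
Proof.
rewrite -{1}[u]mulmx1 -e_last_emb_partition mulmxDr !mulmxA.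
by rewrite mulmx_e_last_col mul_scalar_mx.
Qed.

Lemma emb_mx_free : row_free emb_mx.
Proof.
rewrite /row_free eqn_leq rank_leq_row /=.
by have := mxrankM_maxl emb_mx emb_mx^T; rewrite mulmx_emb_tr mxrank1.
Qed.

Lemma submx_embP p z (X : 'M[F]_(p, n)) :
  (z <= X *m emb_mx)%MS -> last_coord z = 0 /\ (head_vec z <= X)%MS.
Proof.
case/submxP => D ->; rewrite mulmxA last_coord_emb head_vec_emb.
by split; last exact: submxMl.
Qed.

End LastCoordinate.

Section Bracket.
Variables (F : fieldType) (n : nat) (A : 'M[F]_n).
Local Notation emb_mx := (@emb_mx F n).
Local Notation t := (@last_coord F n).
Local Notation h := (@head_vec F n).
Local Notation br := (aA_bracket A).

Lemma aA_colE i : aA_col A i = delta_mx 0 i *m emb_mx^T *m A^T *m emb_mx.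
Proof.
apply/rowP => k; rewrite /aA_col.
case: (unliftP ord_max i) => [i' ->|->]; last first.
  by rewrite mulmx_e_last_emb_tr !mul0mx mxE.
have -> : delta_mx 0 (lift ord_max i') *m emb_mx^T = delta_mx 0 i' :> 'rV[F]_n.
  apply/rowP => l; rewrite !mxE (bigD1 (lift ord_max i')) //= big1.
    by rewrite !mxE !eqxx mul1r addr0 (inj_eq (@lift_inj _ _)) eq_sym.
  by move=> s /negbTE; rewrite !mxE eq_sym => ->; rewrite andbF mul0r.
rewrite !mxE (eq_bigr (fun l => A l i' * (lift ord_max l == k)%:R)).
  by rewrite big_lift_eqr.
move=> l _; rewrite !mxE (bigD1 i') //= big1 ?addr0; first by rewrite !mxE !eqxx mul1r.
by move=> s /negbTE; rewrite !mxE eq_sym => ->; rewrite andbF mul0r.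
Qed.

Lemma sum_aA_col (u : 'rV[F]_n.+1) :
  \sum_i u 0 i *: aA_col A i = h u *m A^T *m emb_mx.
Proof.
rewrite /head_vec {2}(row_sum_delta u) !mulmx_suml; apply: eq_bigr => i _.
by rewrite aA_colE !scalemxAl.
Qed.

Lemma aA_bracketE u v :
  br u v = (t v *: (h u *m A^T) - t u *: (h v *m A^T)) *m emb_mx.
Proof.
have col_last : aA_col A ord_max = 0 by rewrite /aA_col unlift_none.
rewrite /aA_bracket (eq_bigr (fun i => (u 0 i * v 0 ord_max) *: aA_col A i +
     \sum_(j < n.+1 | j != ord_max) (u 0 i * v 0 j) *:
        (if i == ord_max then - aA_col A j else 0))); last first.
  move=> i _; rewrite (bigD1 ord_max) //= /aA_br_basis eqxx; congr (_ + _).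
  by apply: eq_bigr => j /negbTE ->.
rewrite big_split /=.
have -> : \sum_(i < n.+1) (u 0 i * v 0 ord_max) *: aA_col A i
    = v 0 ord_max *: \sum_i u 0 i *: aA_col A i.
  by rewrite scaler_sumr; apply: eq_bigr => i _; rewrite scalerA mulrC.
have -> : \sum_(i < n.+1) \sum_(j < n.+1 | j != ord_max) (u 0 i * v 0 j) *:
        (if i == ord_max then - aA_col A j else 0)
   = - (u 0 ord_max *: \sum_j v 0 j *: aA_col A j).
  rewrite (bigD1 ord_max (P := xpredT)) //= eqxx [X in _ + X]big1 ?addr0; last first.
    by move=> i /negbTE ->; rewrite big1 // => j _; rewrite scaler0.
  rewrite (bigD1 ord_max (P := xpredT)) //= col_last scaler0 add0r.
  rewrite scaler_sumr -sumrN; apply: eq_bigr => j _.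
  by rewrite scalerN scalerA.
by rewrite !sum_aA_col -!last_coordE mulmxBl -!scalemxAl.
Qed.

Lemma aA_bracketN u v : br u v = - br v u.
Proof. by rewrite !aA_bracketE -mulNmx opprB. Qed.

Lemma aA_bracket_embr u w : br u (w *m emb_mx) = (- t u *: (w *m A^T)) *m emb_mx.
Proof. by rewrite aA_bracketE last_coord_emb head_vec_emb scale0r sub0r scaleNr. Qed.

Lemma aA_bracket_embl w v : br (w *m emb_mx) v = (t v *: (w *m A^T)) *m emb_mx.
Proof. by rewrite aA_bracketE last_coord_emb head_vec_emb scale0r subr0. Qed.

Lemma head_vec_aA_bracket u v :
  h (br u v) = t v *: (h u *m A^T) - t u *: (h v *m A^T).
Proof. by rewrite aA_bracketE head_vec_emb. Qed.

End Bracket.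

Section AdjointTrace.
Variables (F : fieldType) (n : nat) (A : 'M[F]_n).
Local Notation emb_mx := (@emb_mx F n).
Local Notation e_last_col := (@e_last_col F n).
Local Notation t := (@last_coord F n).
Local Notation h := (@head_vec F n).

(* The block matrix [[D, 0], [r', c]] in the splitting F^(n+1) = F^n + F,
   where r = r' *m emb_mx + c e_last. *)
Definition blk0_mx (D : 'M[F]_n) (r : 'rV[F]_n.+1) : 'M[F]_n.+1 :=
  emb_mx^T *m D *m emb_mx + e_last_col *m r.

Lemma mul_blk0_mx D1 r1 D2 r2 : r1 *m e_last_col = 0 ->
  blk0_mx D1 r1 *m blk0_mx D2 r2 = blk0_mx (D1 *m D2) (r1 *m emb_mx^T *m D2 *m emb_mx).
Proof.
move=> r1_last; rewrite /blk0_mx mulmxDl !mulmxDr.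
have -> : emb_mx^T *m D1 *m emb_mx *m (emb_mx^T *m D2 *m emb_mx)
    = emb_mx^T *m (D1 *m D2) *m emb_mx.
  by rewrite !mulmxA -[_ *m emb_mx *m emb_mx^T]mulmxA mulmx_emb_tr mulmx1.
have -> : emb_mx^T *m D1 *m emb_mx *m (e_last_col *m r2) = 0.
  by rewrite mulmxA -[_ *m emb_mx *m e_last_col]mulmxA mulmx_emb_last mulmx0 mul0mx.
have -> : e_last_col *m r1 *m (e_last_col *m r2) = 0.
  by rewrite mulmxA -[e_last_col *m r1 *m e_last_col]mulmxA r1_last mulmx0 mul0mx.
by rewrite !addr0 !mulmxA.
Qed.

Lemma mxtrace_blk0_mx D r : r *m e_last_col = 0 -> \tr (blk0_mx D r) = \tr D.
Proof.
move=> r_last; rewrite /blk0_mx mxtraceD mxtrace_mulC mulmxA mulmx_emb_tr mul1mx.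
by rewrite mxtrace_mulC r_last mxtrace0 addr0.
Qed.

Lemma aA_bracket_blk0 u v :
  aA_bracket A u v = v *m blk0_mx (- t u *: A^T) (h u *m A^T *m emb_mx).
Proof.
rewrite aA_bracketE /blk0_mx mulmxDr !mulmxA mulmx_e_last_col mul_scalar_mx.
by rewrite mulmxBl -!scalemxAl -scalemxAr -scalemxAl scaleNr addrC.
Qed.

Lemma aA_adE u : aA_ad A u = blk0_mx (- t u *: A^T) (h u *m A^T *m emb_mx).
Proof. by apply/row_matrixP => i; rewrite rowK aA_bracket_blk0 rowE. Qed.

Lemma scalemxX (c : F) (D : 'M[F]_n) k : (c *: D) ^+ k = c ^+ k *: D ^+ k.
Proof.
elim: k => [|k IH]; first by rewrite !expr0 scale1r.
by rewrite !exprSr IH -!mulmxE -scalemxAl -scalemxAr scalerA.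
Qed.

Lemma mxtrace_trmxX (D : 'M[F]_n) k : \tr (D^T ^+ k) = \tr (D ^+ k).
Proof.
suff -> : D^T ^+ k = (D ^+ k)^T by rewrite mxtrace_tr.
elim: k => [|k IH]; first by rewrite !expr0 trmx1.
by rewrite exprSr IH exprS -!mulmxE trmx_mul.
Qed.

Lemma aA_adX u p : exists2 r, r *m e_last_col = 0 &
  aA_ad A u ^+ p.+1 = blk0_mx ((- t u *: A^T) ^+ p.+1) r.
Proof.
elim: p => [|p [r r_last IH]].
  exists (h u *m A^T *m emb_mx); last by rewrite expr1 aA_adE.
  by rewrite -mulmxA mulmx_emb_last mulmx0.
exists (r *m emb_mx^T *m (- t u *: A^T) *m emb_mx).
  by rewrite -mulmxA mulmx_emb_last mulmx0.
by rewrite exprSr IH aA_adE -mulmxE mul_blk0_mx // mulmxE -exprSr.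
Qed.

Lemma mxtrace_aA_adX u p :
  \tr (aA_ad A u ^+ p.+1) = (- t u) ^+ p.+1 * \tr (A ^+ p.+1).
Proof.
have [r r_last ->] := aA_adX u p.
by rewrite mxtrace_blk0_mx // scalemxX mxtraceZ mxtrace_trmxX.
Qed.

Lemma mxtrace_aA_adXM u v p q : \tr (aA_ad A u ^+ p.+1 *m aA_ad A v ^+ q.+1) =
  (- t u) ^+ p.+1 * (- t v) ^+ q.+1 * \tr (A ^+ (p.+1 + q.+1)).
Proof.
have [r r_last ->] := aA_adX u p; have [r' r'_last ->] := aA_adX v q.
rewrite mul_blk0_mx // mxtrace_blk0_mx; last first.
  by rewrite -mulmxA mulmx_emb_last mulmx0.
rewrite !scalemxX -scalemxAl -scalemxAr !mxtraceZ mulmxE -exprD.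
by rewrite mxtrace_trmxX mulrA.
Qed.

Lemma aA_Cpq p q : (0 < p)%N -> (0 < q)%N ->
  \tr (A ^+ p) != 0 -> \tr (A ^+ q) != 0 -> \tr (A ^+ (p + q)) != 0 ->
  Cpq_well_defined_eq A p q (\tr (A ^+ p) * \tr (A ^+ q) / \tr (A ^+ (p + q))).
Proof.
case: p => // p; case: q => // q _ _ trp trq trpq.
have t_last : - t (e_last F n) != 0 by rewrite last_coord_e_last oppr_eq0 oner_eq0.
split.
  exists (e_last F n), (e_last F n).
  by split; rewrite ?mxtrace_aA_adXM ?mxtrace_aA_adX !mulf_neq0 ?expf_neq0.
move=> u v [_ _]; rewrite !mxtrace_aA_adXM !mxtrace_aA_adX -mulrA.
rewrite !mulf_eq0 !negb_or => /andP[tu /andP[tv _]].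
by field; rewrite tu tv trpq.
Qed.

End AdjointTrace.

Section CharPoly.
Variable F : fieldType.

Lemma char_poly_nilpotent n (M : 'M[F]_n) k : M ^+ k = 0 -> char_poly M = 'X^n.
Proof.
case: n M => [|n] M Mk; first by rewrite /char_poly det_mx00 expr0.
set Y : 'M[{poly F}]_n.+1 := 'X%:M.
set M' := map_mx polyC M.
have cYM : GRing.comm Y M' by rewrite /GRing.comm -!mulmxE scalar_mxC.
have M'k : M' ^+ k = 0 by rewrite /M' -rmorphXn /= Mk map_mx0.
have YX : Y ^+ k = ('X ^+ k)%:M.
  elim: (k) => [|j IH]; first by rewrite !expr0.
  by rewrite !exprSr IH -mulmxE mul_scalar_mx scale_scalar_mx.
(* Y^k - M'^k = (Y - M') * (...) and det (Y - M') is the characteristic polynomial. *)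
have := congr1 determinant (subrXX_comm k cYM).
rewrite M'k subr0 YX det_scalar det_mulmx => Xk.
have /dvdp_exp_XsubCP [j _] : char_poly M %| ('X - 0%:P) ^+ (k * n.+1).
  by rewrite subr0 exprM Xk; apply: dvdp_mulr; exact: dvdpp.
rewrite subr0 eqp_monic ?char_poly_monic ?monicXn // => /eqP chiM.
by have := size_char_poly M; rewrite chiM size_polyXn => -[->].
Qed.

Lemma char_poly_similar n (P M N : 'M[F]_n) : P \in unitmx -> P *m M = N *m P ->
  char_poly M = char_poly N.
Proof.
move=> Pu PM; set P' := map_mx polyC P.
have : P' *m char_poly_mx M = char_poly_mx N *m P'.
  rewrite /char_poly_mx mulmxBr mulmxBl -!map_mxM PM.
  by rewrite mul_mx_scalar mul_scalar_mx.
move/(congr1 determinant); rewrite !det_mulmx mulrC; apply: mulIf.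
by rewrite /P' det_map_mx polyC_eq0 -unitfE -unitmxE.
Qed.

Lemma char_poly_block_diag n1 n2 (M1 : 'M[F]_n1) (M2 : 'M[F]_n2) :
  char_poly (block_mx M1 0 0 M2) = char_poly M1 * char_poly M2.
Proof.
rewrite /char_poly /char_poly_mx scalar_mx_block map_block_mx.
by rewrite !map_mx0 opp_block_mx add_block_mx !oppr0 !addr0 det_ublock.
Qed.

Lemma char_poly_trmx n (M : 'M[F]_n) : char_poly M^T = char_poly M.
Proof.
rewrite /char_poly -det_tr; congr determinant.
by rewrite /char_poly_mx linearB /= tr_scalar_mx map_trmx trmxK.
Qed.

Lemma mup0_char_poly_stable_sum n1 n2 N (M : 'M[F]_N)
    (K : 'M_(n1, N)) (Q : 'M_(n2, N)) M1 M2 k :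
  (n1 + n2 = N)%N -> row_free (col_mx K Q) -> row_free K -> row_free Q ->
  K *m M = M1 *m K -> Q *m M = M2 *m Q ->
  K *m M ^+ k = 0 -> (kermx M :&: Q)%MS = 0 -> mup 0 (char_poly M) = n1.
Proof.
move=> e; subst N => freeKQ freeK freeQ KM QM Kk kerQ.
have KQM : col_mx K Q *m M = block_mx M1 0 0 M2 *m col_mx K Q.
  by rewrite mul_col_mx mul_block_col !mul0mx addr0 add0r KM QM.
rewrite (char_poly_similar _ KQM) -?row_free_unit // char_poly_block_diag.
have M1k : M1 ^+ k = 0.
  have KMX j : K *m M ^+ j = M1 ^+ j *m K.
    elim: j => [|j IH]; first by rewrite !expr0 mulmx1 mul1mx.
    by rewrite !exprSr -!mulmxE mulmxA IH -mulmxA KM mulmxA.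
  by apply: (row_free_inj freeK); rewrite mul0mx -KMX.
rewrite (char_poly_nilpotent M1k) mupMl.
  by rewrite -(subr0 'X) mup_XsubCX eqxx.
rewrite /root horner_coef0 char_poly_det mulf_eq0 negb_or.
rewrite expf_neq0 ?oppr_eq0 ?oner_eq0 //=.
apply/det0P => -[v v_neq0 vM2].
have : (v *m Q <= kermx M :&: Q)%MS.
  by rewrite sub_capmx submxMl andbT sub_kermx -mulmxA QM mulmxA vM2 mul0mx.
rewrite kerQ submx0 -(mul0mx _ Q) => /eqP/(row_free_inj freeQ) v0.
by rewrite v0 eqxx in v_neq0.
Qed.

End CharPoly.

Section GeneralizedKernel.
Variables (F : fieldType) (n : nat) (M : 'M[F]_n.+1).
Local Notation k0 := (mup 0 (char_poly M)).

Definition gkermx : 'M[F]_n.+1 := kermx (M ^+ k0).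
Definition char_poly_unit0 : {poly F} := char_poly M %/ 'X^k0.
Local Notation q := char_poly_unit0.

Lemma char_poly_neq0 : char_poly M != 0.
Proof. by rewrite monic_neq0 // char_poly_monic. Qed.

Lemma char_poly_unit0E : char_poly M = q * 'X^k0.
Proof.
rewrite /q divpK //.
by have := mup_geq 0 k0 char_poly_neq0; rewrite leqnn subr0 => <-.
Qed.

Lemma root0_char_poly_unit0 : ~~ root q 0.
Proof.
apply/negP; rewrite -dvdp_XsubCl => q0.
have : ('X - 0%:P) ^+ k0.+1 %| char_poly M.
  rewrite [X in _ %| X]char_poly_unit0E subr0 exprS.
  by rewrite dvdp_mul2r ?expf_neq0 ?polyX_eq0 // -(subr0 'X).
by rewrite -mup_geq ?char_poly_neq0 // ltnn.
Qed.

Lemma coprimep_Xn_unit0 k : coprimep ('X ^+ k) q.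
Proof.
apply: coprimep_expl; rewrite coprimep_sym.
by have := coprimep_XsubC q 0; rewrite subr0 root0_char_poly_unit0.
Qed.

Lemma kermxpolyXn k : kermxpoly M ('X ^+ k) = kermx (M ^+ k).
Proof. by rewrite /kermxpoly rmorphXn /= horner_mx_X. Qed.

Lemma gkermx_unit0_sum : (1%:M <= gkermx + kermxpoly M q)%MS.
Proof.
rewrite /gkermx -kermxpolyXn -kermxpolyM ?coprimep_Xn_unit0 //.
by rewrite mulrC -char_poly_unit0E /kermxpoly Cayley_Hamilton kermx0.
Qed.

Lemma gkermx_unit0_cap : (gkermx :&: kermxpoly M q)%MS = 0.
Proof. by rewrite /gkermx -kermxpolyXn mxdirect_kermxpoly ?coprimep_Xn_unit0. Qed.

Lemma gkermx_stable p (z : 'M[F]_(p, n.+1)) : (z <= gkermx)%MS -> (z *m M <= gkermx)%MS.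
Proof.
move=> zK; apply: submx_trans (submxMr M zK) _.
rewrite sub_kermx -mulmxA.
have -> : M *m M ^+ k0 = M ^+ k0 *m M by rewrite !mulmxE -exprS -exprSr.
by rewrite mulmxA mulmx_ker mul0mx.
Qed.

Lemma gkermx_max k (z : 'rV[F]_n.+1) : z *m M ^+ k = 0 -> (z <= gkermx)%MS.
Proof.
move=> zk; have /sub_addsmxP [[u1 u2] /= z_sum] :=
  submx_trans (submx1 z) gkermx_unit0_sum.
set z1 := u1 *m gkermx in z_sum; set z2 := u2 *m kermxpoly M q in z_sum.
have z1k : z1 *m M ^+ k0 = 0 by rewrite /z1 -mulmxA mulmx_ker mulmx0.
(* z2 = z - z1 is killed by both M^(k + k0) and q(M), hence vanishes. *)
have : (z2 <= kermxpoly M ('X ^+ (k + k0)) :&: kermxpoly M q)%MS.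
  rewrite sub_capmx submxMl andbT kermxpolyXn sub_kermx.
  have -> : z2 = z - z1 by rewrite z_sum addrC addKr.
  rewrite exprD -mulmxE mulmxBl mulmxA zk mul0mx.
  by rewrite mulmxE -exprD addnC exprD -mulmxE mulmxA z1k mul0mx subrr.
rewrite mxdirect_kermxpoly ?coprimep_Xn_unit0 // submx0 => /eqP z2_0.
by rewrite z_sum z2_0 addr0 submxMl.
Qed.

Lemma mxrank_gkermx : \rank gkermx = k0.
Proof.
set Q := kermxpoly M q.
have rank_sum : (\rank gkermx + \rank Q)%N = n.+1.
  rewrite -mxrank_disjoint_sum ?gkermx_unit0_cap //; apply/eqP.
  by rewrite eqn_leq rank_leq_col -{1}(mxrank1 F n.+1) mxrankS ?gkermx_unit0_sum.
have [M1 KM] : exists M1, row_base gkermx *m M = M1 *m row_base gkermx.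
  by apply/submxP; rewrite !eq_row_base gkermx_stable ?eq_row_base.
have [M2 QM] : exists M2, row_base Q *m M = M2 *m row_base Q.
  apply/submxP; rewrite eq_row_base.
  apply: submx_trans (@comm_mx_stable_kermxpoly _ _ M M q (erefl _)).
  by apply: submxMr; rewrite eq_row_base.
symmetry; apply: (mup0_char_poly_stable_sum rank_sum _ _ _ KM QM (k := k0)).
- rewrite /row_free -addsmxE (adds_eqmx (eq_row_base _) (eq_row_base _)).
  by rewrite mxrank_disjoint_sum ?gkermx_unit0_cap // rank_sum.
- exact: row_base_free.
- exact: row_base_free.
- by apply/eqP; rewrite -sub_kermx eq_row_base.
- apply/eqP; rewrite -submx0 (cap_eqmx (eqmx_refl _) (eq_row_base Q)) submx0.
  by rewrite /Q -kermxpolyX mxdirect_kermxpoly // -(expr1 'X) coprimep_Xn_unit0.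
Qed.

End GeneralizedKernel.

Section Cartan.
Variables (F : fieldType) (n : nat) (A : 'M[F]_n.+1).
Local Notation emb_mx := (@emb_mx F n.+1).
Local Notation e_last := (@e_last F n.+1).
Local Notation t := (@last_coord F n.+1).
Local Notation h := (@head_vec F n.+1).
Local Notation br := (aA_bracket A).
Local Notation lcs := (aA_lcs A).
Local Notation K := (gkermx A^T).

Lemma aA_bracket_lcs S j u v : (u <= S)%MS -> (v <= lcs S j)%MS ->
  (br u v <= lcs S j.+1)%MS.
Proof.
move=> uS vL /=; set Sum := (\sum_(i < n.+2) _)%MS.
have rowS_br i w : (w <= lcs S j)%MS -> (br (row i S) w <= Sum)%MS.
  move=> wL; rewrite aA_bracket_blk0.
  apply: submx_trans (submxMr _ wL) _; apply/row_subP => l.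
  rewrite row_mul -aA_bracket_blk0.
  by apply: (sumsmx_sup i) => //; apply: (sumsmx_sup l) => //; rewrite genmxE.
rewrite aA_bracketN eqmx_opp aA_bracket_blk0.
apply: submx_trans (submxMr _ uS) _; apply/row_subP => i.
by rewrite row_mul -aA_bracket_blk0 aA_bracketN eqmx_opp rowS_br.
Qed.

Lemma aA_lcsS_sub p S j (X : 'M[F]_(p, n.+2)) :
  (forall y z, (y <= S)%MS -> (z <= lcs S j)%MS -> (br y z <= X)%MS) ->
  (lcs S j.+1 <= X)%MS.
Proof.
move=> brX /=; apply/sumsmx_subP => i _; apply/sumsmx_subP => l _.
by rewrite genmxE brX ?row_sub.
Qed.

Definition std_cartan : 'M[F]_n.+2 := (e_last + K *m emb_mx)%MS.

Lemma sub_std_cartan y : (y <= std_cartan)%MS = (h y <= K)%MS.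
Proof.
apply/idP/idP => [/sub_addsmxP [[u1 u2] /= ->] | hK].
  rewrite /head_vec mulmxDl -!mulmxA mulmx_e_last_emb_tr mulmx0 add0r.
  by rewrite mulmx_emb_tr mulmx1 submxMl.
rewrite [y]head_last_decomp addmx_sub_adds ?scalemx_sub //.
exact: submxMr.
Qed.

Lemma std_cartan_subalgebra : aA_subalgebra A std_cartan.
Proof.
move=> u v; rewrite !sub_std_cartan head_vec_aA_bracket => uK vK.
by rewrite addmx_sub ?eqmx_opp ?scalemx_sub ?gkermx_stable.
Qed.

Lemma std_cartan_nilpotent : aA_nilpotent A std_cartan.
Proof.
have lcsK j : (lcs std_cartan j.+1 <= K *m A^T ^+ j.+1 *m emb_mx)%MS.
  elim: j => [|j IH]; apply: aA_lcsS_sub => y z.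
    rewrite !sub_std_cartan expr1 aA_bracketE => yK zK.
    by rewrite submxMr // addmx_sub ?eqmx_opp ?scalemx_sub ?submxMr.
  move=> _ /(submx_trans)/(_ IH)/submx_embP[tz zK].
  rewrite aA_bracketE tz scale0r sub0r -scaleNr submxMr // scalemx_sub //.
  by rewrite exprSr mulmxA submxMr.
exists (mup 0 (char_poly A^T)).+1; apply/eqP; rewrite -submx0.
apply: submx_trans (lcsK _) _.
by rewrite exprSr mulmxA mulmx_ker !mul0mx sub0mx.
Qed.

Lemma std_cartan_self_normalizing : aA_self_normalizing A std_cartan.
Proof.
move=> x.
have e_last_std : (e_last <= std_cartan)%MS by rewrite sub_std_cartan head_vec_e_last sub0mx.
move=> /(_ _ e_last_std); rewrite !sub_std_cartan head_vec_aA_bracket head_vec_e_last.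
rewrite mul0mx scaler0 subr0 last_coord_e_last scale1r => hxK.
apply: (@gkermx_max _ _ _ (mup 0 (char_poly A^T)).+1).
by rewrite exprS mulmxA; apply/eqP; rewrite -sub_kermx.
Qed.

Lemma std_cartan_cartan : aA_cartan A std_cartan.
Proof.
split; [exact: std_cartan_subalgebra | exact: std_cartan_nilpotent |].
exact: std_cartan_self_normalizing.
Qed.

(* If t vanished on S, self-normalization would first put all of
   F^(n+1) *m emb_mx and then e_n into S. *)
Lemma cartan_last_coord1 S : aA_cartan A S -> exists2 x, (x <= S)%MS & t x = 1.
Proof.
case=> _ _ normS.
have [t0 | ] := eqVneq (S *m e_last_col F n.+1) 0.
  have tS s : (s <= S)%MS -> t s = 0.
    by case/submxP => D ->; rewrite /last_coord -mulmxA t0 mulmx0 mxE.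
  have embS (w : 'rV[F]_n.+1) : (w *m emb_mx <= S)%MS.
    apply: normS => s sS.
    by rewrite aA_bracket_embl tS // scale0r mul0mx sub0mx.
  have /tS : (e_last <= S)%MS by apply: normS => s _; rewrite aA_bracketE embS.
  by rewrite last_coord_e_last => /eqP; rewrite oner_eq0.
move=> /matrix0Pn[i [j tSi]]; rewrite ord1 in tSi.
have ti : t (row i S) = (S *m e_last_col F n.+1) i 0 by rewrite /last_coord -row_mul mxE.
exists ((t (row i S))^-1 *: row i S); first by rewrite scalemx_sub ?row_sub.
by rewrite last_coordZ mulVf // ti.
Qed.

Lemma cartan_embE S x : aA_cartan A S -> (x <= S)%MS -> t x = 1 ->
  forall w : 'rV[F]_n.+1, (w *m emb_mx <= S)%MS = (w <= K)%MS.
Proof.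
case=> _ [k lcs0] normS xS tx w; apply/idP/idP => [wS | wK].
  have lcsX j : (w *m A^T ^+ j *m emb_mx <= lcs S j)%MS.
    elim: j => [|j IH]; first by rewrite expr0 mulmx1.
    have := aA_bracket_lcs xS IH.
    by rewrite aA_bracket_embr tx scaleN1r mulNmx eqmx_opp exprSr mulmxA.
  apply: (@gkermx_max _ _ _ k).
  by move: (lcsX k); rewrite lcs0 submx0 => /eqP/(congr1 h); rewrite head_vec_emb /head_vec mul0mx.
(* [w emb_mx, s] = t(s) (w A^T) emb_mx, so S contains w emb_mx as soon as it
   contains (w A^T) emb_mx. *)
have embS j (z : 'rV[F]_n.+1) : z *m A^T ^+ j = 0 -> (z *m emb_mx <= S)%MS.
  elim: j z => [|j IH] z zj.
    by move: zj; rewrite expr0 mulmx1 => ->; rewrite mul0mx sub0mx.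
  apply: normS => s _; rewrite aA_bracket_embl -scalemxAl scalemx_sub //.
  by apply: IH; rewrite -mulmxA mulmxE -exprS.
by move: wK; rewrite /gkermx sub_kermx => /eqP/embS.
Qed.

Lemma mxrank_cartan S : aA_cartan A S -> \rank S = (mup 0 (char_poly A)).+1.
Proof.
move=> cartanS; have [x xS tx] := cartan_last_coord1 cartanS.
have embS := cartan_embE cartanS xS tx.
have eqS : (S == x + K *m emb_mx)%MS.
  apply/andP; split; last first.
    by rewrite addsmx_sub xS /=; apply/row_subP => i; rewrite row_mul embS row_sub.
  apply/row_subP => i; set s := row i S; set y := s - t s *: x.
  have sS : (s <= S)%MS by apply: row_sub.
  have ty : t y = 0 by rewrite /y last_coordD -scaleNr last_coordZ tx mulr1 subrr.
  have yE : y = h y *m emb_mx by rewrite {1}[y]head_last_decomp ty scale0r add0r.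
  rewrite -[s](subrK (t s *: x)) -/y addrC addmx_sub_adds ?scalemx_sub //.
  by rewrite yE submxMr // -embS -yE addmx_sub ?eqmx_opp ?scalemx_sub.
rewrite (eqmx_rank eqS) mxrank_disjoint_sum.
  rewrite rank_rV mxrankMfree ?emb_mx_free // mxrank_gkermx char_poly_trmx.
  suff -> : x != 0 by [].
  by apply: contra_neq (oner_neq0 F) => x0; rewrite -tx x0 last_coord0.
apply/eqP/rowV0P => y; rewrite sub_capmx => /andP[/sub_rVP[a ->] /submx_embP[ty _]].
by move: ty; rewrite last_coordZ tx mulr1 => ->; rewrite scale0r.
Qed.

End Cartan.

Lemma trig_mxX (R : comNzRingType) n (T : 'M[R]_n) p : is_trig_mx T ->
  is_trig_mx (T ^+ p) /\ forall i, (T ^+ p) i i = T i i ^+ p.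
Proof.
move=> /is_trig_mxP trigT; elim: p => [|p [/is_trig_mxP IH1 IH2]].
  split; last by move=> i; rewrite expr0 !mxE eqxx.
  apply/is_trig_mxP => i j lt_ij.
  by rewrite expr0 mxE eq_sym -(inj_eq val_inj) /= gtn_eqF.
split.
  apply/is_trig_mxP => i j lt_ij; rewrite exprSr -mulmxE mxE big1 // => l _.
  have [il|li] := ltnP i l; first by rewrite IH1 // mul0r.
  by rewrite trigT ?mulr0 // (leq_ltn_trans li).
move=> i; rewrite exprSr -mulmxE mxE (bigD1 i) //= big1 ?addr0 ?IH2 ?exprSr //.
move=> l /negbTE nl; case: (ltngtP i l) => [il|li|/val_inj il].
- by rewrite IH1 // mul0r.
- by rewrite trigT ?mulr0.
- by rewrite il eqxx in nl.
Qed.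

Lemma mxtraceX_roots (C : numClosedFieldType) n (M : 'M[C]_n) (lam : 'I_n -> C) p :
  char_poly M = \prod_(i < n) ('X - (lam i)%:P) -> \tr (M ^+ p) = \sum_i lam i ^+ p.
Proof.
case: n M lam => [|n] M lam chiM; first by rewrite /mxtrace !big_ord0.
have [P unitaryP] := Schur M (ltn0Sn n).
rewrite /similar_to /conjmx /= pinvmxE ?unitarymx_unit // => trigT.
set T := P *m M *m invmx P in trigT.
have unitP := unitarymx_unit unitaryP.
have PM : P *m M = T *m P by rewrite /T mulmxKV.
have PMX : P *m M ^+ p = T ^+ p *m P.
  elim: p => [|p IH]; first by rewrite !expr0 mulmx1 mul1mx.
  by rewrite !exprSr -!mulmxE mulmxA IH -mulmxA PM mulmxA.
have -> : \tr (M ^+ p) = \tr (T ^+ p).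
  by rewrite -[M ^+ p](mulKmx unitP) PMX mxtrace_mulC -mulmxA mulmxV // mulmx1.
have [_ diagTX] := trig_mxX p trigT.
rewrite /mxtrace (eq_bigr _ (fun i _ => diagTX i)).
have : perm_eq [seq T i i | i <- index_enum 'I_n.+1] [seq lam i | i <- index_enum 'I_n.+1].
  apply: prod_XsubC_eq; rewrite !big_map -char_poly_trig // -chiM.
  by rewrite (char_poly_similar unitP PM).
rewrite -(big_map (fun i => T i i) xpredT (fun x => x ^+ p)).
by rewrite -(big_map lam xpredT (fun x => x ^+ p)); apply: perm_big.
Qed.

Lemma lemma2_concl_closed (F : fieldType) (C : numClosedFieldType)
    (iota : {rmorphism F -> C}) n (A : 'M[F]_n.+1) : lemma2_concl iota A.
Proof.
split; last first.
  by split; [exists (std_cartan A); exact: std_cartan_cartan | exact: mxrank_cartan].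
move=> p q p_gt0 q_gt0 trp trq trpq; split; first exact: aA_Cpq.
move=> lam chi_lam.
by rewrite fmorph_div rmorphM -!trace_map_mx !rmorphXn !(mxtraceX_roots _ chi_lam).
Qed.

Theorem lemma2 (R : realType) (m : nat) (hm : (1 <= m)%N) :
  (forall A : 'M[R]_m, lemma2_concl (real_complex R) A) /\
  (forall A : 'M[R[i]]_m, lemma2_concl (@idfun R[i]) A).
Proof. by case: m hm => // m _; split => A; exact: lemma2_concl_closed. Qed.
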